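(* Let $G$ be a finite group and let $k$ be an integer with $2 \leq k < d(G)$. Then $G$ is $k$-flexible if and only if $G/\mathrm{Cyc}(G)$ is $k$-flexible.
   Context: For a finite group $H$, $d(H)$ denotes the minimal size of a generating set of $H$. For an integer $1 \leq k \leq d(H)$, a finite group $H$ is called $k$-flexible if for any $x_1,\dots,x_k \in H$ with $d(\langle x_1,\dots,x_k\rangle)=k$ there exist $x_{k+1},\dots,x_{d(H)} \in H$ such that $\langle x_1,\dots,x_{d(H)}\rangle = H$. The cycliciser of $G$ is $\mathrm{Cyc}(G) = \{c \in G \mid \langle c,g\rangle \text{ is cyclic for all } g \in G\}$; it is a normal subgroup of $G$. *)

From mathcomp Require Import all_boot all_fingroup all_solvable.
Set Implicit Arguments.
Unset Strict Implicit.
Unset Printing Implicit Defensive.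
Local Open Scope group_scope.

(* d(H) is MathComp's gen_rank H = 'm(H) (abelian.v): the minimal size of
   a set B with <<B>> = H. *)

Definition Cyc (gT : finGroupType) (G : {set gT}) : {set gT} :=
  [set c in G | [forall g in G, cyclic <<[set c; g]>>]].

Definition flexible (gT : finGroupType) (k : nat) (H : {set gT}) : Prop :=
  (1 <= k <= gen_rank H)%N /\
  forall x : k.-tuple gT, {subset x <= H} ->
    gen_rank <<[set:: x]>> = k ->
    exists y : (gen_rank H - k).-tuple gT,
      {subset y <= H} /\ <<[set:: x ++ y]>> = H.

From mathcomp Require Import all_boot all_fingroup all_solvable.

Set Implicit Arguments.
Unset Strict Implicit.
Unset Printing Implicit Defensive.

(* Cyc(G) is central and cyclic, and <y, Cyc(G)> is cyclic for every y in G.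
   In a cyclic group <y, N> some y c with c in N is a generator, so if y and S
   generate G modulo a subgroup N of Cyc(G), then y c and S generate G for some
   c in N.  Changing a single generator thus lifts generating sets from
   G / Cyc(G) to G; this gives d(H / Cyc(G)) = d(H) for noncyclic H <= G, and
   it transports flexibility in both directions, the hypothesis k < d(G)
   guaranteeing that there is a free generator to change. *)

Lemma coprime_prime_dvdn m n : 0 < n ->
  (forall p, prime p -> p %| n -> ~~ (p %| m)) -> coprime m n.
Proof.
move=> n_gt0 noP; apply: contraT; rewrite /coprime => ne1.
have g_gt1 : 1 < gcdn m n by rewrite ltn_neqAle eq_sym ne1 gcdn_gt0 n_gt0 orbT.
have pd := pdiv_dvd (gcdn m n).
have := noP _ (pdiv_prime g_gt1) (dvdn_trans pd (dvdn_gcdr m n)).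
by rewrite (dvdn_trans pd (dvdn_gcdl m n)).
Qed.

Lemma coprime_addn_mul a d n : 0 < n -> coprime (gcdn a d) n ->
  exists t, coprime (a + d * t) n.
Proof.
(* Every prime of n divides exactly one of a and d * t. *)
move=> n_gt0 co_adn; pose t := n`_[pred p | ~~ (p %| a)]; exists t.
apply: coprime_prime_dvdn => // p p_pr p_n.
have p_t : (p %| t) = ~~ (p %| a).
  have := pi_of_part [pred p | ~~ (p %| a)] n_gt0 p.
  by rewrite !inE /= !mem_primes p_pr n_gt0 p_n part_gt0.
have [p_a | p'a] := boolP (p %| a); last by rewrite dvdn_addl // dvdn_mull // p_t.
rewrite dvdn_addr // Euclid_dvdM // p_t p_a orbF.
apply: contraL co_adn => p_d.
have p_ad : p %| gcdn a d by rewrite dvdn_gcd p_a p_d.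
by apply/negP => /(coprime_dvdl p_ad); rewrite prime_coprime // p_n.
Qed.

Local Open Scope group_scope.

Lemma set_cat_cons (T : finType) (x t : seq T) y :
  [set:: x ++ y :: t] = y |: [set:: x ++ t].
Proof. by apply/setP=> z; rewrite !inE !mem_cat inE orbCA. Qed.

Lemma grank_gt1_ncyclic (gT : finGroupType) (A : {set gT}) :
  1 < gen_rank A -> ~~ cyclic A.
Proof. by apply: contraL => /cyclicP[x ->]; rewrite -leqNgt -(cards1 x) grank_min. Qed.

Section Cycliciser.
Variable gT : finGroupType.
Implicit Types (G H K N : {group gT}) (x y g c : gT).

Lemma cyclic_gen2P K x y : x \in K -> y \in K ->
  reflect (exists w, [/\ w \in K, x \in <[w]> & y \in <[w]>]) (cyclic <<[set x; y]>>).
Proof.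
move=> xK yK; apply: (iffP idP) => [/cyclicP[w def_w] | [w [_ xw yw]]].
  exists w; rewrite -cycle_subG -def_w gen_subG subUset !sub1set xK yK.
  by split=> //; apply: mem_gen; rewrite !inE eqxx ?orbT.
by apply: cyclicS (cycle_cyclic w); rewrite gen_subG subUset !sub1set xw.
Qed.

Lemma cyclic_joing_mul x N : cyclic (<[x]> <*> N) ->
  exists2 c, c \in N & <[x]> <*> N = <[x * c]>.
Proof.
(* With <[x]> <*> N = <[u]>, x = u ^+ a and N = <[u ^+ d]>, writing u in
   <[x]> * N shows that gcdn a d is coprime to #[u]; then x * (u ^+ d) ^+ t is
   u ^+ (a + d * t), a generator once a + d * t is coprime to #[u]. *)
case/cyclicP=> u defXN; have /cyclicP[v defN] : cyclic N.
  by apply: (cyclicS _ (cycle_cyclic u)); rewrite /= -defXN joing_subr.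
have /cycleP[a def_x] : x \in <[u]> by rewrite -defXN mem_gen // inE cycle_id.
have /cycleP[d def_v] : v \in <[u]>.
  by rewrite -defXN (subsetP (joing_subr _ _)) // defN cycle_id.
have cXN : commute <[x]> N.
  apply: centC; apply: (sub_abelian_cent2 (cycle_abelian u)); rewrite -defXN.
    exact: joing_subl.
  exact: joing_subr.
have /mulsgP[_ _ /cycleP[i ->] /cycleP[j ->] def_u] : u \in <[x]> * <[v]>.
  by rewrite -defN -comm_joingE // defXN cycle_id.
have co_adu : coprime (gcdn a d) #[u].
  have def_1 : a * i + d * j = 1 %[mod #[u]].
    by apply/eqP; rewrite -eq_expg_mod_order expg1 expgD !expgM -def_x -def_v -def_u.
  have : coprime (a * i + d * j) #[u].
    by rewrite -coprime_modl def_1 coprime_modl coprime1n.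
  apply: coprime_dvdl.
  by rewrite dvdn_add // dvdn_mulr // (dvdn_gcdl, dvdn_gcdr).
have [t co_t] := coprime_addn_mul (order_gt0 u) co_adu.
exists (v ^+ t); first by rewrite defN mem_cycle.
have gen_u : generator <[u]> (u ^+ (a + d * t)).
  by rewrite generator_coprime coprime_sym.
by rewrite defXN (eqP gen_u) def_x def_v -expgM -expgD.
Qed.


Lemma CycP G c :
  reflect (c \in G /\ {in G, forall g, cyclic <<[set c; g]>>}) (c \in Cyc G).
Proof.
by rewrite inE; apply: (iffP andP) => -[cG cycC]; split=> //; apply/forall_inP.
Qed.

Lemma Cyc_sub G : Cyc G \subset G.
Proof. by apply/subsetP=> c /CycP[]. Qed.

Lemma group_set_Cyc G : group_set (Cyc G).
Proof.
apply/group_setP; split.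
  apply/CycP; split=> // g gG; apply/(cyclic_gen2P (group1 G) gG).
  by exists g; rewrite group1 cycle_id.
move=> c d /CycP[cG cycC] /CycP[dG cycD].
apply/CycP; split=> [|g gG]; first exact: groupM.
have /(cyclic_gen2P dG gG)[w [wG dw gw]] := cycD g gG.
have /(cyclic_gen2P cG wG)[v [vG cv wv]] := cycC w wG.
have sWV : <[w]> \subset <[v]> by rewrite cycle_subG.
apply/(cyclic_gen2P (groupM cG dG) gG).
by exists v; split; rewrite ?groupM // (subsetP sWV).
Qed.

Canonical Cyc_group G := Group (group_set_Cyc G).

Lemma Cyc_sub_cent G : Cyc G \subset 'C(G).
Proof.
apply/subsetP=> c /CycP[cG cycC]; apply/centP=> g gG.
have /(cyclic_gen2P cG gG)[w [_ cw gw]] := cycC g gG.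
exact: (centsP (cycle_abelian w)).
Qed.

Lemma Cyc_normal G : Cyc G <| G.
Proof. by rewrite /normal Cyc_sub cents_norm // centsC Cyc_sub_cent. Qed.

Lemma Cyc_setI_subG G H : H \subset G -> H :&: Cyc G \subset Cyc H.
Proof.
move=> sHG; apply/subsetP=> c /setIP[cH /CycP[_ cycC]].
by apply/CycP; split=> // g /(subsetP sHG); apply: cycC.
Qed.

Lemma cyclic_joing_Cyc G y : y \in G -> cyclic (<[y]> <*> Cyc G).
Proof.
(* Take <[w]> containing y with #[w] maximal: for c in Cyc G, <<[set c; w]>>
   lies in some <[v]> with v in G, and maximality forces <[v]> = <[w]>. *)
move=> yG; pose P w := (w \in G) && (y \in <[w]>).
have Py : P y by rewrite /P yG cycle_id.
case: (@arg_maxnP _ y P (fun w => #[w]) Py) => w /andP[wG yw] max_w.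
apply: (cyclicS _ (cycle_cyclic w)); rewrite join_subG cycle_subG yw /=.
apply/subsetP=> c /CycP[cG cycC].
have /(cyclic_gen2P cG wG)[v [vG cv wv]] := cycC w wG.
have sWV : <[w]> \subset <[v]> by rewrite cycle_subG.
have /eqP-> : <[w]> == <[v]>.
  by rewrite eqEcard sWV; apply: max_w; rewrite /P vG (subsetP sWV).
exact: cv.
Qed.

Lemma gen_mul_subCyc H N y (S : {set gT}) :
    N \subset Cyc H -> y \in H -> S \subset H -> H \subset N * <<y |: S>> ->
  exists2 c, c \in N & <<(y * c) |: S>> = H.
Proof.
move=> sNC yH sSH sH_NY; have sNH := subset_trans sNC (Cyc_sub H).
have cycYN : cyclic (<[y]> <*> N).
  exact: cyclicS (genS (setUS _ sNC)) (cyclic_joing_Cyc yH).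
have [c cN defYN] := cyclic_joing_mul cycYN.
exists c => //; apply/eqP; rewrite eqEsubset gen_subG subUset sub1set.
rewrite groupM ?(subsetP sNH c cN) // sSH /=; apply: subset_trans sH_NY _.
set K := <<(y * c) |: S>>; have sYN_K : <[y]> <*> N \subset K.
  by rewrite defYN cycle_subG mem_gen ?setU11.
have [sYK sNK] := joing_subP sYN_K.
rewrite mul_subG // gen_subG subUset sub1set -cycle_subG sYK /=.
exact: subset_trans (subsetUr _ _) (subset_gen _).
Qed.

Lemma cyclic_Cyc G : cyclic (Cyc G).
Proof. exact: cyclicS (joing_subr _ _) (cyclic_joing_Cyc (group1 G)). Qed.

Lemma quotient_gen_seq N (s : seq gT) : {subset s <= 'N(N)} ->
  <<[set:: s]>> / N = <<[set:: map (coset N) s]>>.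
Proof.
move=> nNs; rewrite quotient_gen; last by apply/subsetP=> x; rewrite inE => /nNs.
rewrite quotientE morphimEsub; last by apply/subsetP=> x; rewrite inE => /nNs.
congr <<_>>; apply/setP=> b; rewrite inE.
by apply/imsetP/mapP=> -[x]; rewrite ?inE => xs ->; exists x; rewrite ?inE.
Qed.

Lemma lift_seq_quotient N H (sb : seq (coset_of N)) : {subset sb <= H / N} ->
  exists2 s : seq gT, {subset s <= H} & map (coset N) s = sb.
Proof.
elim: sb => [|b sb IHsb] sbH; first by exists [::].
have /morphimP[x _ xH ->] := sbH b (mem_head b sb).
have [|s sH <-] := IHsb; first by move=> a a_sb; apply: sbH; rewrite inE a_sb orbT.
by exists (x :: s) => // z; rewrite inE => /predU1P[-> | /sH].
Qed.

Lemma gen_seq_subG K (s : seq gT) : {subset s <= K} -> <<[set:: s]>> \subset K.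
Proof. by move=> sK; rewrite gen_subG; apply/subsetP=> x; rewrite inE => /sK. Qed.

Lemma grank_quotient_Cyc G H : H \subset G -> ~~ cyclic H ->
  gen_rank (H / Cyc G) = gen_rank H.
Proof.
move=> sHG ncycH; have nCH := subset_trans sHG (normal_norm (Cyc_normal G)).
apply/eqP; rewrite eqn_leq quotient_grank //=.
have [Bb defHb <-] := grank_witness (H / Cyc G).
have [s sH def_s] : exists2 s, {subset s <= H} & map (coset (Cyc G)) s = enum Bb.
  by apply: lift_seq_quotient => b; rewrite mem_enum -defHb; apply: mem_gen.
have sH_NS : H \subset (H :&: Cyc G) * <<[set:: s]>>.
  rewrite group_modr ?gen_seq_subG // subsetI subxx -quotientSK //=.
  by rewrite quotient_gen_seq ?def_s ?set_enum ?defHb // => x /sH; apply: (subsetP nCH).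
case: s sH def_s sH_NS => [|y t] sH def_s.
  rewrite set_nil gen0 mulg1 => sHC; case/negP: ncycH.
  exact: cyclicS (subset_trans sHC (Cyc_setI_subG sHG)) (cyclic_Cyc H).
rewrite set_cons => sH_NYT.
have sTH : [set:: t] \subset H.
  by apply/subsetP=> x; rewrite inE => xt; apply: sH; rewrite inE xt orbT.
have [c _ <-] := gen_mul_subCyc (Cyc_setI_subG sHG) (sH y (mem_head y t)) sTH sH_NYT.
rewrite (leq_trans (grank_min _)) // cardsU1 [#|Bb|]cardE -def_s size_map /=.
by rewrite -add1n leq_add ?leq_b1 // cardsE card_size.
Qed.

Lemma gen_cat_mod_Cyc G (x y : seq gT) :
    {subset x ++ y <= G} -> y != [::] -> G \subset Cyc G * <<[set:: x ++ y]>> ->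
  exists2 y', size y' = size y & {subset y' <= G} /\ <<[set:: x ++ y']>> = G.
Proof.
case: y => // y0 t sXYG _; rewrite set_cat_cons => sG_CY.
have y0G : y0 \in G by apply: sXYG; rewrite mem_cat mem_head orbT.
have sXTG : [set:: x ++ t] \subset G.
  apply/subsetP=> z; rewrite inE mem_cat => /orP[zx | zt]; apply: sXYG.
    by rewrite mem_cat zx.
  by rewrite mem_cat inE zt !orbT.
have [c cC defG] := gen_mul_subCyc (subxx _) y0G sXTG sG_CY.
exists (y0 * c :: t) => //; split; last by rewrite set_cat_cons.
move=> z; rewrite inE => /predU1P[-> | zt].
  by rewrite groupM // (subsetP (Cyc_sub G)).
by apply: sXYG; rewrite mem_cat inE zt !orbT.
Qed.

Lemma flexible_quotient_Cyc G k : 1 < k -> flexible k G -> flexible k (G / Cyc G).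
Proof.
move=> k_gt1 [/andP[k_gt0 k_le] flexG]; have nCG := normal_norm (Cyc_normal G).
have rankG := grank_quotient_Cyc (subxx G) (grank_gt1_ncyclic (leq_trans k_gt1 k_le)).
split=> [|xb xbG rank_xb]; first by rewrite rankG k_gt0.
have [x xG def_xb] := lift_seq_quotient xbG.
have size_x : size x == k by rewrite -(size_map (coset (Cyc G))) def_xb size_tuple.
have defXb : <<[set:: x]>> / Cyc G = <<[set:: xb]>>.
  by rewrite quotient_gen_seq ?def_xb // => z /xG; apply: (subsetP nCG).
have ncycX : ~~ cyclic <<[set:: x]>>.
  have : ~~ cyclic <<[set:: xb]>> by apply: grank_gt1_ncyclic; rewrite rank_xb.
  by apply: contra => /(quotient_cyclic (Cyc G)); rewrite defXb.
have rank_x : gen_rank <<[set:: x]>> = k.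
  by rewrite -(grank_quotient_Cyc (gen_seq_subG xG) ncycX) defXb.
have [y [yG defG]] := flexG (Tuple size_x) xG rank_x.
rewrite rankG; exists (map_tuple (coset (Cyc G)) y); split.
  by move=> _ /mapP[z /yG zG ->]; apply: mem_quotient.
rewrite /= -def_xb -map_cat -quotient_gen_seq ?defG // => z.
by rewrite mem_cat => /orP[/xG | /yG] /(subsetP nCG).
Qed.

Lemma flexible_from_quotient_Cyc G k : 1 < k -> k < gen_rank G ->
  flexible k (G / Cyc G) -> flexible k G.
Proof.
move=> k_gt1 k_lt [_ flexGb]; have nCG := normal_norm (Cyc_normal G).
have rankG := grank_quotient_Cyc (subxx G) (grank_gt1_ncyclic (ltn_trans k_gt1 k_lt)).
split=> [|x xG rank_x]; first by rewrite (ltnW k_lt) (ltnW k_gt1).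
have nCx : {subset x <= 'N(Cyc G)} by move=> z /xG; apply: (subsetP nCG).
pose xb := map_tuple (coset (Cyc G)) x.
have xbG : {subset xb <= G / Cyc G}.
  by move=> _ /mapP[z /xG zG ->]; apply: mem_quotient.
have rank_xb : gen_rank <<[set:: xb]>> = k.
  rewrite -quotient_gen_seq // grank_quotient_Cyc ?gen_seq_subG //.
  by apply: grank_gt1_ncyclic; rewrite rank_x.
have [yb [ybG defGb]] := flexGb xb xbG rank_xb.
have [y yG def_yb] := lift_seq_quotient ybG.
have size_y : size y = gen_rank G - k.
  by rewrite -(size_map (coset (Cyc G))) def_yb size_tuple rankG.
have sXYG : {subset x ++ y <= G} by move=> z; rewrite mem_cat => /orP[/xG | /yG].
have y_neq0 : y != [::] by rewrite -size_eq0 size_y subn_eq0 -ltnNge.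
have sG_CXY : G \subset Cyc G * <<[set:: x ++ y]>>.
  rewrite -def_yb in defGb; rewrite -quotientSK ?quotient_gen_seq ?map_cat -?defGb //.
  by move=> z /sXYG; apply: (subsetP nCG).
have [y' size_y' [y'G defG]] := gen_cat_mod_Cyc sXYG y_neq0 sG_CXY.
have size_y'k : size y' == gen_rank G - k by rewrite size_y' size_y.
by exists (Tuple size_y'k).
Qed.

End Cycliciser.

Theorem lemma2p4 (gT : finGroupType) (G : {group gT}) (k : nat) :
  (2 <= k)%N -> (k < gen_rank G)%N ->
  (flexible k G <-> flexible k (G / Cyc G)%g).
Proof.
move=> k_gt1 k_lt; split; first exact: flexible_quotient_Cyc.
exact: flexible_from_quotient_Cyc.
Qed.
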